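(* Let $f:X\to Y$ be a continuous surjection between compact spaces such that $f$ is light, i.e. every fibre $f^{-1}(y)$, $y\in Y$, is zero-dimensional. Let $A$ be the set of all continuous functions $u:X\to [0,1]$ such that $u[f^{-1}(y)]$ is zero-dimensional for every $y\in Y$. If $Y$ has property $C$, then $A$ is a dense $G_\delta$-subset of $C(X,[0,1])$.
   Context: Compact spaces are Hausdorff. $C(X,[0,1])$ denotes the space of all continuous maps $u:X\to[0,1]$ with the sup-metric $d(u,v)=\sup_{x\in X}|u(x)-v(x)|$. A space $Y$ has property $C$ (is a $C$-space) if for every sequence $\{\alpha_n:n\in\omega\}$ of open covers of $Y$ there is a sequence $\{\mu_n:n\in\omega\}$, where each $\mu_n$ is a family of pairwise disjoint open subsets of $Y$ refining $\alpha_n$, such that $\bigcup_{n\in\omega}\mu_n$ covers $Y$. *)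

From HB Require Import structures.
From mathcomp Require Import all_boot all_order all_algebra.
From mathcomp Require Import all_classical all_reals all_analysis.
Set Implicit Arguments. Unset Strict Implicit. Unset Printing Implicit Defensive.
Import Order.TTheory GRing.Theory Num.Theory.
Import numFieldNormedType.Exports.
Local Open Scope classical_set_scope.
Local Open Scope ring_scope.

Definition zero_dim {T : topologicalType} (S : set T) : Prop :=
  forall (x : T) (U : set T), S x -> open U -> U x ->
    exists W : set T, W x /\ W `&` S `<=` U /\
      (exists O, open O /\ W `&` S = O `&` S) /\
      (exists C, closed C /\ W `&` S = C `&` S).

Definition open_cover {Y : topologicalType} (a : set (set Y)) : Prop :=
  (forall U, a U -> open U) /\ (forall y : Y, exists2 U, a U & U y).

Definition C_space (Y : topologicalType) : Prop :=
  forall alpha : nat -> set (set Y), (forall n, open_cover (alpha n)) ->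
  exists mu : nat -> set (set Y),
    (forall n U, mu n U -> open U) /\
    (forall n U V, mu n U -> mu n V -> U <> V -> U `&` V = set0) /\
    (forall n U, mu n U -> exists2 V, alpha n V & U `<=` V) /\
    (forall y : Y, exists n, exists2 U, mu n U & U y).

Definition CX01 {X : topologicalType} {R : realType} : set (X -> R) :=
  [set u : X -> R | continuous u /\ forall x, 0 <= u x <= 1].

Definition supdist_lt {X : topologicalType} {R : realType}
  (u v : X -> R) (e : R) : Prop :=
  exists r : R, r < e /\ forall x, `|u x - v x| <= r.

Definition open_in_CX01 {X : topologicalType} {R : realType}
  (G : set (X -> R)) : Prop :=
  forall u, CX01 u -> G u ->
    exists2 e : R, 0 < e & forall v, CX01 v -> supdist_lt u v e -> G v.

Definition dense_in_CX01 {X : topologicalType} {R : realType}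
  (A : set (X -> R)) : Prop :=
  A `<=` CX01 /\
  forall u, CX01 u -> forall e : R, 0 < e -> exists2 v, A v & supdist_lt u v e.

Definition Gdelta_in_CX01 {X : topologicalType} {R : realType}
  (A : set (X -> R)) : Prop :=
  exists G : nat -> set (X -> R), (forall n, open_in_CX01 (G n)) /\
    A = CX01 `&` \bigcap_n G n.

(* A compact subset of the line is zero-dimensional iff it contains no
   nondegenerate segment.  Hence A is the intersection of C(X,[0,1]) with the
   sets of those u for which no fibre image u[f^-1(y)] contains a segment of
   length 1/(n+1); compactness of X and Y gives each such u a uniform margin,
   so these sets are open.

   For density, u is approximated by maps taking finitely many values on every
   fibre.  A compact zero-dimensional fibre has finite clopen partitions into
   pieces on which u varies by less than d, so near the fibre u is d-close to a
   locally constant map with finitely many values; by compactness of X this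
   holds on a whole tube f^-1(V).  Finitely many tubes cover X, and the local
   maps are glued with bump functions of the form l o f: these are constant
   on fibres, so each fibre still receives finitely many values. *)

From HB Require Import structures.
From mathcomp Require Import all_boot all_order all_algebra.
From mathcomp Require Import all_classical all_reals all_analysis.
From mathcomp Require Import ring lra.
Import Order.TTheory GRing.Theory Num.Theory.
Import numFieldNormedType.Exports.
Local Open Scope classical_set_scope.
Local Open Scope ring_scope.

Lemma set_seq_cons {T : eqType} (x : T) (s : seq T) : [set` x :: s] = x |` [set` s].
Proof.
apply/seteqP; split => y /=; rewrite in_cons; first by case/orP => [/eqP|]; [left|right].
by case=> [->|->]; rewrite ?eqxx ?orbT.
Qed.

Section ZeroDimReal.
Context {R : realType}.
Implicit Types (S : set R) (a b : R).

Lemma zero_dim_dense_compl S :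
  (forall a b, a < b -> exists2 t, a < t < b & ~ S t) -> zero_dim S.
Proof.
move=> gap x U Sx oU Ux.
have /nbhs_ballP [r r0 rU] : nbhs x U by apply: open_nbhs_nbhs.
have [a /andP [xra ax] nSa] : exists2 t, x - r < t < x & ~ S t.
  by apply: gap; rewrite ltrBlDr ltrDl.
have [b /andP [xb bxr] nSb] : exists2 t, x < t < x + r & ~ S t.
  by apply: gap; rewrite ltrDl.
exists `]a, b[%classic; split; first by rewrite /= in_itv /= ax xb.
split.
  move=> z [/= + _]; rewrite in_itv /= => /andP [az zb]; apply: rU.
  by rewrite /ball /= ltr_norml; apply/andP; split; lra.
split; first by exists `]a, b[%classic; split => //; exact: interval_open.
exists `[a, b]%classic; split; first exact: interval_closed.
apply/seteqP; split => z [/= + Sz]; rewrite !in_itv /=.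
  by move=> /andP [az zb]; split => //; rewrite !ltW.
move=> /andP [az zb]; split => //; rewrite !lt_neqAle az zb !andbT.
by apply/andP; split; apply/eqP => e; [apply: nSa; rewrite e|apply: nSb; rewrite -e].
Qed.

Lemma exists_itv_notin (s : seq R) a b : a < b -> exists2 t, a < t < b & t \notin s.
Proof.
elim: s a b => [|x s IH] a b ab.
  by exists ((a + b) / 2) => //; apply/andP; split; lra.
have [xm|xm] := lerP x ((a + b) / 2).
  have [t /andP [mt tb] ts] := IH ((a + b) / 2) b ltac:(lra).
  exists t; first by apply/andP; split; lra.
  by rewrite in_cons negb_or ts andbT; apply/eqP => tx; lra.
have [t /andP [mt tb] ts] := IH a ((a + b) / 2) ltac:(lra).
exists t; first by apply/andP; split; lra.
by rewrite in_cons negb_or ts andbT; apply/eqP => tx; lra.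
Qed.

Lemma zero_dim_seq S (s : seq R) : S `<=` [set` s] -> zero_dim S.
Proof.
move=> Ss; apply: zero_dim_dense_compl => a b ab.
by have [t abt ts] := exists_itv_notin s a b ab; exists t => // /Ss; exact/negP.
Qed.

(* The clopen neighbourhood of the midpoint would disconnect the segment. *)
Lemma zero_dim_no_segment S a b : zero_dim S -> a < b -> ~ `[a, b]%classic `<=` S.
Proof.
move=> zS ab abS.
have [m /andP [am mb]] : exists m, a < m < b by exists ((a + b) / 2); apply/andP; split; lra.
have mab : `]a, b[%classic m by rewrite /= in_itv /= am mb.
have abm : `[a, b]%classic m by rewrite /= in_itv /= !ltW.
have oab : open `]a, b[%classic by exact: interval_open.
have [W [Wm [WSab [ [U [oU WU]] [V [cV WV]]]]]] := zS m _ (abS _ abm) oab mab.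
have abUV : `[a, b]%classic `&` U = `[a, b]%classic `&` V.
  apply/seteqP; split => t [tab Wt]; split => //.
    have : (U `&` S) t by split => //; exact: abS.
    by rewrite -WU WV => -[].
  have : (V `&` S) t by split => //; exact: abS.
  by rewrite -WV WU => -[].
have abU : `[a, b]%classic `&` U = `[a, b]%classic.
  apply: segment_connected; [|by exists U|by exists V].
  exists m; split => //; have : (W `&` S) m by split => //; exact: abS.
  by rewrite WU => -[].
have aab : `[a, b]%classic a by rewrite /= in_itv /= lexx ltW.
have Ua : U a by move: aab; rewrite -abU => -[].
have : (W `&` S) a by rewrite WU; split => //; exact: abS.
by move/WSab; rewrite /= in_itv /= ltxx.
Qed.

End ZeroDimReal.

Lemma compact_seq_subcover {T : topologicalType} (I : choiceType) (D : set I)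
    (O : I -> set T) (K : set T) :
  compact K -> (forall i, D i -> open (O i)) -> K `<=` \bigcup_(i in D) O i ->
  exists2 s : seq I, [set` s] `<=` D & K `<=` \bigcup_(i in [set` s]) O i.
Proof.
move=> /compact_near_coveringP cK oO KO.
pose F : set_system (seq I) := fun P =>
  exists2 s0 : seq I, [set` s0] `<=` D &
    forall s : seq I, [set` s] `<=` D -> {subset s0 <= s} -> P s.
have FF : Filter F.
  split; first by exists [::].
  - move=> P Q [s1 D1 P1] [s2 D2 Q2]; exists (s1 ++ s2).
      by move=> i /=; rewrite mem_cat => /orP [/D1|/D2].
    move=> s sD s12; split; [apply: P1|apply: Q2] => // i si.
      by apply: s12; rewrite mem_cat si.
    by apply: s12; rewrite mem_cat si orbT.
  - by move=> P Q PQ [s0 D0 P0]; exists s0 => // s sD /(P0 _ sD) /PQ.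
pose P (s : seq I) (x : T) := [set` s] `<=` D /\ (\bigcup_(i in [set` s]) O i) x.
have [|s0 D0 Fcov] := cK _ F P FF.
  move=> x Kx; have [i Di Oix] := KO x Kx.
  exists (O i, [set s : seq I | [set` s] `<=` D /\ i \in s]).
    split=> /=; first by apply: open_nbhs_nbhs; split => //; exact: oO.
    exists [:: i]; first by move=> j /=; rewrite mem_seq1 => /eqP ->.
    by move=> s sD /(_ i (mem_head _ _)).
  by case=> x' s [/= Oix' [sD si]]; split => //; exists i.
by exists s0 => // x /(Fcov s0 D0 (fun _ => id)) [].
Qed.

Lemma near_eq_continuous_at {T U : topologicalType} (g h : T -> U) (x : T) :
  (\forall z \near x, g z = h z) -> {for x, continuous g} -> {for x, continuous h}.
Proof.
move=> gh gc; have ghx : g x = h x by exact: nbhs_singleton gh.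
by apply: (cvg_trans (near_eq_cvg gh)); rewrite -ghx.
Qed.

Lemma normal_bump (R : realType) (T : topologicalType) (B V : set T) :
  normal_space T -> closed B -> open V -> B `<=` V ->
  exists2 N : set T, open N /\ B `<=` N & exists l : T -> R,
    [/\ continuous l, forall z, 0 <= l z <= 1, N `<=` l @^-1` [set 1]
      & closure [set z | l z != 0] `<=` V].
Proof.
move=> nT cB oV BV.
have BV0 : B `&` ~` V = set0 by apply/seteqP; split => z // [/BV].
have [U1 [V1 [oU1 oV1 BU1 nVV1 UV1]]] :=
  (proj1 (@normal_openP R T) nT) B (~` V) cB (open_closedC oV) BV0.
have BU0 : B `&` ~` U1 = set0 by apply/seteqP; split => z // [/BU1].
have [N [Q [oN oQ BN nUQ NQ]]] :=
  (proj1 (@normal_openP R T) nT) B (~` U1) cB (open_closedC oU1) BU0.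
have sep : uniform_separator (~` U1) (~` Q).
  apply: (proj1 (@normal_separatorP R T) nT); [exact: open_closedC..|].
  by apply/seteqP; split => z // [/nUQ].
have [l [lc l01 l0 l1]] := (proj1 (@uniform_separatorP T R _ _) sep).
exists N => //; exists l; split => //.
- by move=> z; have : `[0, 1]%classic (l z) by apply: l01; exists z.
- move=> z Nz; apply: l1; exists z => // Qz.
  by have : (N `&` Q) z by []; rewrite NQ.
- have lU1 : [set z | l z != 0] `<=` U1.
    move=> z /eqP lz; apply: contrapT => nU1z; apply: lz.
    by apply: l0; exists z.
  have U1V1 : U1 `<=` ~` V1 by move=> z U1z V1z; have : (U1 `&` V1) z by []; rewrite UV1.
  have V1V : ~` V1 `<=` V by move=> z nV1z; apply: contrapT => /nVV1.
  apply: subset_trans V1V; rewrite ((closure_id _).1 (open_closedC oV1)).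
  exact/closureS/(subset_trans lU1 U1V1).
Qed.

Section ConvexCombination.
Context {R : realDomainType}.
Implicit Types l a b c e : R.

Lemma convex_comb_itv01 l a b : 0 <= l <= 1 -> 0 <= a <= 1 -> 0 <= b <= 1 ->
  0 <= l * a + (1 - l) * b <= 1.
Proof.
move=> /andP [l0 l1] /andP [a0 a1] /andP [b0 b1].
have : 0 <= l * a by rewrite mulr_ge0.
have : 0 <= (1 - l) * b by rewrite mulr_ge0 // subr_ge0.
have : 0 <= l * (1 - a) by rewrite mulr_ge0 // subr_ge0.
have : 0 <= (1 - l) * (1 - b) by rewrite mulr_ge0 // subr_ge0.
by move=> *; apply/andP; split; nra.
Qed.

Lemma convex_comb_dist_le l a b c e : 0 <= l <= 1 ->
  `|a - c| <= e -> `|b - c| <= e -> `|l * a + (1 - l) * b - c| <= e.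
Proof.
move=> /andP [l0 l1] ac bc.
have -> : l * a + (1 - l) * b - c = l * (a - c) + (1 - l) * (b - c) by ring.
apply: (le_trans (ler_normD _ _)).
rewrite !normrM (ger0_norm l0) (@ger0_norm _ (1 - l)) ?subr_ge0 //.
have : l * `|a - c| <= l * e by rewrite ler_wpM2l.
have : (1 - l) * `|b - c| <= (1 - l) * e by rewrite ler_wpM2l // subr_ge0.
by move=> *; nra.
Qed.

End ConvexCombination.

Section FibreSegments.
Context (R : realType) (X Y : topologicalType) (f : X -> Y).
Hypotheses (cX : compact [set: X]) (cY : compact [set: Y]) (hY : hausdorff_space Y)
  (fc : continuous f).

Local Notation fibre y := (f @^-1` [set y]).

Lemma fibre_image_away (u : X -> R) y t : continuous u ->
  ~ (u @` fibre y) t ->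
  exists2 e : R, 0 < e & \forall y' \near y, forall x, f x = y' -> e <= `|u x - t|.
Proof.
move=> uc yt.
pose P (i : Y * R) x := f x = i.1 -> i.2 <= `|u x - t|.
pose F := filter_prod (nbhs y) (0^'+ : set_system R).
have Pnear (x : X) : \forall x' \near x & i \near F, P i x'.
  have [fxy|fxy] := eqVneq (f x) y.
    have : 0 < `|u x - t|.
      by rewrite normr_gt0 subr_eq0; apply/eqP => uxt; apply: yt; exists x.
    move ue: `|u x - t| => e e0.
    exists ([set x' | `|u x - u x'| < e / 2], [set i : Y * R | i.2 < e / 2]).
      split; first exact: (cvgr_dist_lt u (u x) (uc x) (e / 2) ltac:(lra)).
      exists (setT, [set r : R | r < e / 2]); first split => /=.
      - exact: filterT.
      - by apply: nbhs_right_lt; lra.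
      by case=> ? ? [_ /=].
    case=> x' [y' r] [/= uxx' re] _.
    have : `|u x - t| <= `|u x - u x'| + `|u x' - t|.
      by rewrite (le_trans _ (ler_normD _ _)) // addrA subrK.
    by rewrite ue /= => ?; apply/ltW; lra.
  move: hY; rewrite open_hausdorff => /(_ _ _ fxy) [[A B] /= [/set_mem Ax /set_mem By]].
  case=> oA oB /eqP AB0.
  exists (f @^-1` A, [set i : Y * R | B i.1]).
    split; first by apply: fc; apply: open_nbhs_nbhs.
    exists (B, setT); first by split => /=; [exact: open_nbhs_nbhs|exact: filterT].
    by case=> ? ? [/= ? _].
  case=> x' [y' r] [/= Ax' By']; rewrite /P /= => fx'.
  have : (A `&` B) y' by split => //; rewrite -fx'.
  by rewrite AB0.
have [[Y1 E1] [/= Y1y E1r] sub] := (proj1 (compact_near_coveringP _) cX) _ _ P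
  (filter_prod_filter _ _) (fun x _ => Pnear x).
have [e [E1e e0]] := filter_ex (filterI E1r (nbhs_right_gt 0)).
exists e => //; apply: filterS Y1y => y' Y1y' x fx.
exact: (sub (y', e) (conj Y1y' E1e) x I fx).
Qed.

Definition segment_free (n : nat) : set (X -> R) := [set u | forall y a,
  ~ `[a, a + n.+1%:R^-1]%classic `<=` u @` fibre y].

Lemma segment_free_margin n (u : X -> R) : continuous u -> segment_free n u ->
  exists2 e : R, 0 < e & forall y a, 0 <= a <= 1 ->
    exists2 t, a <= t <= a + n.+1%:R^-1 & forall x, f x = y -> e <= `|u x - t|.
Proof.
move=> uc un; set L : R := n.+1%:R^-1.
pose P (e : R) (p : Y * R) :=
  exists2 t, p.2 <= t <= p.2 + L & forall x, f x = p.1 -> e <= `|u x - t|.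
have Pnear (p : Y * R) : \forall p' \near p & e \near 0^'+, P e p'.
  case: p => y a.
  have [t0 t0I t0y] : exists2 t0, a <= t0 <= a + L & ~ (u @` fibre y) t0.
    apply: contrapT => none; apply: (un y a) => t tI.
    by apply: contrapT => nt; apply: none; exists t.
  have [e e0 ye] := @fibre_image_away u y t0 uc t0y.
  exists ([set p : Y * R | (forall x, f x = p.1 -> e <= `|u x - t0|) /\
                          `|a - p.2| < e / 2], [set r : R | r < e / 2]).
    split => /=; last by apply: nbhs_right_lt; lra.
    exists ([set y' | forall x, f x = y' -> e <= `|u x - t0|],
            [set r : R | `|a - r| < e / 2]); last by case=> ? ? [/= ? ?].
    by split => //=; exact: (cvgr_dist_lt id a (@cvg_id _ _) (e / 2) ltac:(lra)).
  case=> [[y' a'] r] [/= [ey' aa'] re].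
  rewrite /P /=; exists (t0 + (a' - a)).
    by move: t0I => /andP [? ?]; apply/andP; split; lra.
  move=> x fx; have := ey' x fx.
  have : `|u x - t0| <= `|u x - (t0 + (a' - a))| + `|a - a'|.
    have -> : u x - t0 = (u x - (t0 + (a' - a))) + (a' - a) by ring.
    by rewrite [`|a - a'|]distrC; exact: ler_normD.
  by lra.
have cYI : compact ([set: Y] `*` `[(0:R), 1]%classic).
  by apply: compact_setX => //; exact: segment_compact.
have [r /= r0 rP] := (proj1 (compact_near_coveringP _) cYI) R (0^'+) P _
  (fun p _ => Pnear p).
have r20 : 0 < r / 2 by lra.
exists (r / 2) => // y a a01.
apply: (rP (r / 2) _ r20 (y, a)); last by split => //=; rewrite in_itv.
by rewrite /ball /= sub0r normrN gtr0_norm //; lra.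
Qed.

Lemma open_segment_free n : open_in_CX01 (segment_free n).
Proof.
move=> u [uc u01] un; have [e e0 ue] := @segment_free_margin n u uc un.
exists e => // v [_ v01] [r [re vr]] y a av.
have L0 : 0 <= (n.+1%:R : R)^-1 by rewrite invr_ge0 ler0n.
have a01 : 0 <= a <= 1.
  have [x _ <-] : (v @` fibre y) a by apply: av; rewrite /= in_itv /= lexx lerDl.
  exact: v01.
have [t tI tfar] := ue y a a01.
have [x fx vxt] := av t ltac:(by rewrite /= in_itv).
by have := tfar x fx; rewrite -vxt; have := vr x; lra.
Qed.

Lemma zero_dim_fibre_images_segment_free (u : X -> R) :
  (forall y, zero_dim (u @` fibre y)) <-> forall n, segment_free n u.
Proof.
split => [zd n y a|un y].
  by apply: zero_dim_no_segment (zd y) _; rewrite ltrDl invr_gt0 ltr0n.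
apply: zero_dim_dense_compl => a b ab.
have [n Lba] : exists n, (n.+1%:R : R)^-1 < b - a.
  exists (Num.truncn (b - a)^-1).
  by rewrite invf_plt ?posrE ?ltr0n ?subr_gt0 //; exact: truncnS_gt.
have L0 : 0 < (n.+1%:R : R)^-1 by rewrite invr_gt0 ltr0n.
move: (n.+1%:R^-1 : R) (un n y) Lba L0 => L unL Lba L0.
have /existsNP [t /not_implyP [/= tI nt]] := unL (a + (b - a - L) / 2).
by exists t => //; move: tI; rewrite in_itv /= => /andP [? ?]; apply/andP; split; lra.
Qed.

End FibreSegments.

Section FiniteFibreApproximation.
Context (R : realType) (X Y : topologicalType) (f : X -> Y).
Hypotheses (cX : compact [set: X]) (hX : hausdorff_space X)
  (cY : compact [set: Y]) (hY : hausdorff_space Y) (fc : continuous f).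
Variables (u : X -> R) (d : R).
Hypotheses (uc : continuous u) (u01 : forall x, 0 <= u x <= 1) (d0 : 0 < d).

Local Notation fibre y := (f @^-1` [set y]).

Definition approx_on (U : set X) (g : X -> R) :=
  [/\ forall x, U x -> {for x, continuous g}, forall x, 0 <= g x <= 1,
      forall x, U x -> `|g x - u x| <= d & exists s : seq R, g @` U `<=` [set` s]].

Definition approx_near (K : set X) :=
  exists2 U : set X, open U /\ K `<=` U & exists g, approx_on U g.

Lemma approx_onS U U' g : U' `<=` U -> approx_on U g -> approx_on U' g.
Proof.
move=> U'U [gc g01 gu [s gs]]; split => //.
- by move=> x /U'U; exact: gc.
- by move=> x /U'U; exact: gu.
- by exists s => _ [x /U'U Ux <-]; apply: gs; exists x.
Qed.

Lemma approx_nearS K K' : K' `<=` K -> approx_near K -> approx_near K'.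
Proof. by move=> sKK [U [oU KU] gU]; exists U => //; split => //; exact: subset_trans KU. Qed.

Lemma approx_near0 : approx_near set0.
Proof.
exists set0; first by split; [exact: open0|].
exists (fun=> 0); split => //; first by move=> x; rewrite lexx ler01.
by exists [::] => r [x].
Qed.

Lemma approx_near_cst (x0 : X) (U K : set X) : open U -> K `<=` U ->
  (forall x, U x -> `|u x0 - u x| < d) -> approx_near K.
Proof.
move=> oU KU Ud; exists U => //; exists (fun=> u x0); split.
- by move=> x _; exact: cvg_cst.
- by move=> _; exact: u01.
- by move=> x /Ud; rewrite distrC => /ltW.
- by exists [:: u x0] => r [x _ <-]; rewrite /= mem_seq1.
Qed.

Lemma approx_nearU K1 K2 : closed K1 -> closed K2 -> K1 `&` K2 = set0 ->
  approx_near K1 -> approx_near K2 -> approx_near (K1 `|` K2).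
Proof.
move=> cK1 cK2 K12 [U1 [oU1 KU1] [g1 [g1c g101 g1u [s1 gs1]]]]
  [U2 [oU2 KU2] [g2 [g2c g201 g2u [s2 gs2]]]].
have [V1 [V2 [oV1 oV2 KV1 KV2 V12]]] :=
  (proj1 (@normal_openP R X) (compact_normal hX cX)) K1 K2 cK1 cK2 K12.
pose W1 := U1 `&` V1; pose W2 := U2 `&` V2.
have nW12 x : W2 x -> ~ W1 x.
  by move=> [_ V2x] [_ V1x]; have : (V1 `&` V2) x by []; rewrite V12.
pose g x := if pselect (W1 x) then g1 x else g2 x.
have gW1 x : W1 x -> g x = g1 x by rewrite /g; case: pselect.
have gW2 x : W2 x -> g x = g2 x by move=> /nW12; rewrite /g; case: pselect.
have oW1 : open W1 by exact: openI.
have oW2 : open W2 by exact: openI.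
exists (W1 `|` W2); first split.
- exact: openU.
- by move=> x [K1x|K2x]; [left; split; [exact: KU1|exact: KV1]
                         |right; split; [exact: KU2|exact: KV2]].
exists g; split.
- move=> x [W1x|W2x].
    apply: (@near_eq_continuous_at _ _ g1); last exact: g1c (proj1 W1x).
    by apply: filterS (open_nbhs_nbhs (conj oW1 W1x)) => z /gW1.
  apply: (@near_eq_continuous_at _ _ g2); last exact: g2c (proj1 W2x).
  by apply: filterS (open_nbhs_nbhs (conj oW2 W2x)) => z /gW2.
- by move=> x; rewrite /g; case: pselect => W1x; [exact: g101|exact: g201].
- by move=> x [W1x|W2x]; [rewrite gW1 //; exact: g1u (proj1 W1x)
                        |rewrite gW2 //; exact: g2u (proj1 W2x)].
- exists (s1 ++ s2) => _ [x [W1x|W2x] <-]; rewrite /= mem_cat.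
    by rewrite gW1 // (gs1 (g1 x)) //; exists x => //; case: W1x.
  by rewrite gW2 // (gs2 (g2 x)) ?orbT //; exists x => //; case: W2x.
Qed.

Definition small_relclopen (F V : set X) :=
  [/\ open V, closed (V `&` F) & exists x0, forall x, V x -> `|u x0 - u x| < d].

Lemma approx_near_small_relclopen (F : set X) (s : seq (set X)) :
  [set` s] `<=` small_relclopen F ->
  closed (F `&` \bigcup_(V in [set` s]) V) /\
  approx_near (F `&` \bigcup_(V in [set` s]) V).
Proof.
elim: s => [|V s IH] sF; first by rewrite set_nil bigcup_set0 setI0; split;
  [exact: closed0|exact: approx_near0].
rewrite set_seq_cons bigcup_setU1.
have [oV cVF [x0 Vx0]] := sF V (mem_head _ _).
have [cFs aFs] : closed (F `&` \bigcup_(W in [set` s]) W) /\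
    approx_near (F `&` \bigcup_(W in [set` s]) W).
  by apply: IH => W sW; apply: sF; rewrite /= in_cons sW orbT.
have -> : F `&` (V `|` \bigcup_(W in [set` s]) W) =
    (V `&` F) `|` ((F `&` \bigcup_(W in [set` s]) W) `&` ~` V).
  apply/seteqP; split => x.
    by case=> Fx [Vx|sx]; [left|have [Vx|nVx] := pselect (V x); [left|right]].
  by case=> [[Vx Fx]|[[Fx sx] _]]; split => //; [left|right].
have cFsV : closed ((F `&` \bigcup_(W in [set` s]) W) `&` ~` V).
  by apply: closedI => //; exact: open_closedC.
split; first exact: closedU.
apply: approx_nearU => //.
- by apply/seteqP; split => x // [[Vx _] [_ /(_ Vx)]].
- by apply: (approx_near_cst x0 V _ oV _ Vx0) => x [].
- by apply: approx_nearS aFs => x [].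
Qed.

Lemma approx_near_fibre y : zero_dim (fibre y) -> approx_near (fibre y).
Proof.
move=> zd; have cF : closed (fibre y).
  apply: preimage_closed; first by move=> x _; exact: fc.
  exact: (accessible_closed_set1 (hausdorff_accessible hY)).
have piece x : fibre y x ->
    exists2 V, small_relclopen (fibre y) V & V x.
  move=> Fx; pose B := u @^-1` ball (u x) d.
  have oB : open B by apply: open_comp; [move=> z _; exact: uc|exact: ball_open].
  have [W [Wx [WB [[U [oU WU]] [C [cC WC]]]]]] := zd x B Fx oB (ballxx _ d0).
  exists (U `&` B); last first.
    by split; [have : (W `&` fibre y) x by []; rewrite WU => -[]|exact: ballxx].
  split; [exact: openI|  |by exists x => z [_]].
  have -> : U `&` B `&` fibre y = C `&` fibre y.
    rewrite -WC WU; apply/seteqP; split => z; first by case=> -[].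
    by move=> [Uz Fz]; split => //; split => //; apply: WB; rewrite WU.
  exact: closedI.
have cpF : compact (fibre y) by exact: subclosed_compact cF cX _.
have oD V : small_relclopen (fibre y) V -> open V by case.
have [s sF Fs] := @compact_seq_subcover _ _ _ id _ cpF oD piece.
have [_] := approx_near_small_relclopen _ _ sF.
by apply: approx_nearS => x Fx; split => //; exact: Fs.
Qed.

Lemma approx_tube y : zero_dim (fibre y) ->
  exists2 V : set Y, open V /\ V y & exists g, approx_on (f @^-1` V) g.
Proof.
move=> /approx_near_fibre [U [oU FU] [g gU]].
have cfU : closed (f @` ~` U).
  apply: compact_closed => //; apply: continuous_compact.
    exact: continuous_subspaceT.
  by apply: subclosed_compact cX _; [exact: open_closedC|].
exists (~` (f @` ~` U)); first by split; [exact: closed_openC|case=> x nUx /FU].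
exists g; apply: approx_onS gU => x nfx.
by apply: contrapT => nUx; apply: nfx; exists x.
Qed.

Definition bump_approx (N : set Y) := exists V g (l : Y -> R),
  approx_on (f @^-1` V) g /\ [/\ continuous l, forall z, 0 <= l z <= 1,
    N `<=` l @^-1` [set 1] & closure [set z | l z != 0] `<=` V].

Lemma bump_approx_nbhs y : zero_dim (fibre y) ->
  exists2 N, open N /\ bump_approx N & N y.
Proof.
move=> /approx_tube [V [oV Vy] [g gV]].
have cy : closed [set y] by exact: (accessible_closed_set1 (hausdorff_accessible hY)).
have yV : [set y] `<=` V by move=> z ->.
have [N [oN yN] [l lP]] := @normal_bump R Y _ _ (compact_normal hY cY) cy oV yV.
by exists N; [split => //; exists V, g, l|exact: yN].
Qed.

Definition finite_on_fibre (w : X -> R) y := exists s : seq R, w @` fibre y `<=` [set` s].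

Lemma glue_continuous (w g : X -> R) (l : Y -> R) (V : set Y) : continuous w ->
  (forall x, V (f x) -> {for x, continuous g}) -> continuous l ->
  closure [set z | l z != 0] `<=` V ->
  continuous (fun x => l (f x) * g x + (1 - l (f x)) * w x).
Proof.
move=> wc gc lc lV x; have [Vfx|nVfx] := pselect (V (f x)).
  have lfc : {for x, continuous (l \o f)} by apply: continuous_comp; [exact: fc|exact: lc].
  apply: cvgD; first by apply: cvgM; [exact: lfc|exact: gc].
  by apply: cvgM; [apply: cvgB; [exact: cvg_cst|exact: lfc]|exact: wc].
apply: (@near_eq_continuous_at _ _ w); last exact: wc.
have : nbhs x (f @^-1` ~` closure [set z | l z != 0]).
  apply: fc; apply: open_nbhs_nbhs; split; last by move/lV.
  exact/closed_openC/closed_closure.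
apply: filterS => z /= nlz.
have -> : l (f z) = 0 by apply: contrapT => /eqP lz; apply/nlz/subset_closure.
by rewrite mul0r subr0 mul1r add0r.
Qed.

Lemma glue_approx (w : X -> R) (N : set Y) :
  CX01 w -> (forall x, `|w x - u x| <= d) -> bump_approx N ->
  exists2 w', CX01 w' /\ (forall x, `|w' x - u x| <= d) &
    forall y, finite_on_fibre w y \/ N y -> finite_on_fibre w' y.
Proof.
move=> [wc w01] wu [V [g [l [[gc g01 gu [sg gs]] [lc l01 lN lV]]]]].
have lfV x : l (f x) != 0 -> V (f x) by move=> lx; apply/lV/subset_closure.
have w'E x : l (f x) = 0 -> l (f x) * g x + (1 - l (f x)) * w x = w x.
  by move=> ->; rewrite mul0r subr0 mul1r add0r.
exists (fun x => l (f x) * g x + (1 - l (f x)) * w x).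
  split; first split.
  - exact: glue_continuous wc gc lc lV.
  - by move=> x; apply: convex_comb_itv01.
  - move=> x; have [l0|l0] := eqVneq (l (f x)) 0; first by rewrite w'E.
    by apply: convex_comb_dist_le => //; apply: gu; exact: lfV.
(* l o f is constant on the fibre over y. *)
move=> y [[s ws]|Ny].
  have [l0|l0] := eqVneq (l y) 0.
    by exists s => _ [x /= fx <-]; rewrite /= w'E ?fx //; apply: ws; exists x.
  exists [seq l y * a + (1 - l y) * b | a <- sg, b <- s] => _ [x /= fx <-].
  rewrite /= fx; apply: allpairs_f; last by apply: ws; exists x.
  by apply: gs; exists x => //; apply: lfV; rewrite fx.
have ly1 : l y = 1 by exact: lN.
exists sg => _ [x /= fx <-]; rewrite /= fx ly1 subrr mul0r addr0 mul1r.
by apply: gs; exists x => //; apply: lfV; rewrite fx ly1 oner_neq0.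
Qed.

Lemma finite_fibres_approx : (forall y, zero_dim (fibre y)) ->
  exists2 w, CX01 w /\ (forall x, `|w x - u x| <= d) & forall y, finite_on_fibre w y.
Proof.
move=> light.
have oD N : open N /\ bump_approx N -> open N by case.
have [s sD Ys] := @compact_seq_subcover _ _ _ id _ cY oD
  (fun y _ => bump_approx_nbhs _ (light y)).
suff [w wu ws] : exists2 w, CX01 w /\ (forall x, `|w x - u x| <= d) &
    forall y, (\bigcup_(N in [set` s]) N) y -> finite_on_fibre w y.
  by exists w => // y; apply: ws; exact: Ys.
elim: s sD {Ys} => [|N s IH] sD.
  exists u; first by split => // x; rewrite subrr normr0 ltW.
  by move=> y; rewrite set_nil bigcup_set0.
have [|w [wC wu] ws] := IH.
  by move=> M sM; apply: sD; rewrite /= in_cons sM orbT.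
have [_ bN] := sD N (mem_head _ _).
have [w' w'u w's] := glue_approx _ _ wC wu bN.
exists w' => // y; rewrite set_seq_cons bigcup_setU1 => -[Ny|sy].
  by apply: w's; right.
by apply: w's; left; exact: ws.
Qed.

End FiniteFibreApproximation.

Theorem theorem1 (R : realType) (X Y : topologicalType) (f : X -> Y) :
  compact [set: X] -> hausdorff_space X ->
  compact [set: Y] -> hausdorff_space Y ->
  continuous f -> (forall y : Y, exists x : X, f x = y) ->
  (forall y : Y, zero_dim (f @^-1` [set y])) ->
  C_space Y ->
  let A : set (X -> R) :=
    [set u | CX01 u /\ forall y : Y, zero_dim (u @` (f @^-1` [set y]))] in
  dense_in_CX01 A /\ Gdelta_in_CX01 A.
Proof.
move=> cX hX cY hY fc _ light _ A; split.
- split=> [u []//|u [uc u01] e e0].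
  have e20 : 0 < e / 2 by lra.
  have [w [wC wu] wfin] :=
    @finite_fibres_approx R X Y f cX hX cY hY fc u (e / 2) uc u01 e20 light.
  exists w; first by split => // y; have [s ws] := wfin y; exact: zero_dim_seq ws.
  by exists (e / 2); split; [lra|move=> x; rewrite distrC].
- exists (segment_free R X Y f); split; first exact: open_segment_free.
  apply/seteqP; split=> u [uC uP]; split => //.
    by move=> n _; exact: (zero_dim_fibre_images_segment_free R X Y f u).1.
  by apply/(zero_dim_fibre_images_segment_free R X Y f u) => n; exact: uP.
Qed.
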